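(* Assume $a+b\le1$. Then the marginal law $\nu$ of $\omega$ under $\mathbf P$, viewed as a measure on subsets of $\mathsf E$, satisfies the FKG lattice condition: $\nu(\xi_1\cap\xi_2)\,\nu(\xi_1\cup\xi_2)\ge\nu(\xi_1)\,\nu(\xi_2)$ for all $\xi_1,\xi_2\subseteq\mathsf E$.
   Context: Let $M$ be a compact orientable surface without boundary, or the plane. Let $\mathsf G=(\mathsf V,\mathsf E)$ be a finite connected graph embedded in $M$ with all faces topological discs, and $\mathsf G^*=(\mathsf U,\mathsf E^* )$ its embedded dual ($\mathsf U$ = faces of $\mathsf G$); $e^*$ is the dual edge crossing $e$, $\xi^*=\{e^*:e\in\xi\}$. Fix integers $q,q'\ge1$, finite $Q,Q'\subset\mathbb C$ with $Q=-Q$, $Q'=-Q'$, $|Q|=q$, $|Q'|=q'$, and $a,b\in(0,1]$. For $\sigma:\mathsf V\to Q$, $\eta(\sigma)\subseteq\mathsf E^*$ is the set of $e^*$ whose primal $e$ has endpoints with different $\sigma$-values; for $\sigma':\mathsf U\to Q'$, $\eta(\sigma')\subseteq\mathsf E$ is the set of $e$ whose dual $e^*$ has endpoints with different $\sigma'$-values. $\mathbf P(\sigma,\sigma')\propto a^{|\eta(\sigma')|}b^{|\eta(\sigma)|}$ on $\Sigma=\{(\sigma,\sigma'):\eta(\sigma)^*\cap\eta(\sigma')=\emptyset\}$. Percolation (for $a+b\le1$): given $(\sigma,\sigma')$, every edge of $\eta(\sigma')$ and every dual edge of $\eta(\sigma)$ is open; for each pair $(e,e^* )$ with $e\notin\eta(\sigma')$,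 $e^*\notin\eta(\sigma)$, independently, ($e$ open, $e^*$ closed) w.p. $a$, ($e$ closed, $e^*$ open) w.p. $b$, both open w.p. $1-a-b$. $\omega\subseteq\mathsf E$ is the set of open primal edges; $\mathbf P$ is the joint law. *)

From HB Require Import structures.
From mathcomp Require Import all_boot all_order all_algebra all_fingroup.
From mathcomp Require Import finmap.
From mathcomp Require Import complex.
Set Implicit Arguments. Unset Strict Implicit. Unset Printing Implicit Defensive.
Import Order.TTheory GRing.Theory Num.Theory.
Local Open Scope ring_scope.

(* Cellularly embedded graphs in a compact orientable surface are encoded,   *)
(* as usual, by combinatorial maps (rotation systems):                        *)
(*   - E : finType is the set of edges; the darts are E * bool, the two      *)
(*     half-edges of e being (e,true) and (e,false);                         *)
(*   - rot : {perm E * bool} is the rotation (cyclic order of the darts      *)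
(*     around each vertex);  vertices = orbits of rot;                       *)
(*   - faces = orbits of fperm rot := rot \o alpha.                           *)
(* The embedded dual edge e^* joins the faces of the two darts of e.         *)

Definition alpha (E : finType) (d : E * bool) : E * bool := (d.1, ~~ d.2).

Definition fperm (E : finType) (rot : {perm E * bool}) (d : E * bool) :=
  rot (alpha d).

Definition same_vertex (E : finType) (rot : {perm E * bool}) (d d' : E * bool) :=
  fconnect rot d d'.
Definition same_face (E : finType) (rot : {perm E * bool}) (d d' : E * bool) :=
  fconnect (fperm rot) d d'.

Definition map_connected (E : finType) (rot : {perm E * bool}) :=
  forall d d' : E * bool,
    connect [rel x y | (y == rot x) || (y == alpha x)] d d'.

(* Spin configurations.  A spin on the vertices is a function on darts that  *)
(* is constant on vertices (rot-orbits); a spin on the faces is a function   *)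
(* on darts constant on faces (fperm-orbits).  This is in bijection with     *)
(* functions V -> Q, resp. U -> Q'.                                          *)

Section Model.
Variables (R : rcfType) (E : finType) (rot : {perm E * bool}).
Variables (Q Q' : {fset R[i]}).

Definition vspin (s : {ffun E * bool -> Q}) : bool :=
  [forall d, s (rot d) == s d].
Definition fspin (s : {ffun E * bool -> Q'}) : bool :=
  [forall d, s (fperm rot d) == s d].

(* eta(sigma) : set of edges e whose dual e^* is in eta(sigma), i.e. the     *)
(* primal endpoints of e carry different sigma-values.                        *)
Definition eta_v (s : {ffun E * bool -> Q}) : {set E} :=
  [set e | val (s (e, true)) != val (s (e, false))].
(* eta(sigma') : set of edges e whose dual endpoints (faces of the two darts *)
(* of e) carry different sigma'-values.                                       *)
Definition eta_f (s' : {ffun E * bool -> Q'}) : {set E} :=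
  [set e | val (s' (e, true)) != val (s' (e, false))].

Definition admissible (s : {ffun E * bool -> Q}) (s' : {ffun E * bool -> Q'}) :=
  [&& vspin s, fspin s' & [disjoint eta_v s & eta_f s']].

Variables (a b : R).

Definition spin_weight s s' : R :=
  if admissible s s' then a ^+ #|eta_f s'| * b ^+ #|eta_v s| else 0.

Definition Zpart : R := \sum_s \sum_s' spin_weight s s'.

(* conditional law of the state (e open?, e^* open?) of the pair (e, dual e)  *)
(* given (sigma, sigma').  Edges of eta(sigma') are open (their duals closed, *)
(* since they separate different sigma'-values); dual edges of eta(sigma)     *)
(* are open (their primal edges closed).                                      *)
Definition pair_law s s' (e : E) (o os : bool) : R :=
  if e \in eta_f s' then (o && ~~ os)%:R
  else if e \in eta_v s then (~~ o && os)%:R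
  else if o && ~~ os then a
  else if ~~ o && os then b
  else if o && os then 1 - a - b
  else 0.

Definition joint_law s s' (w ws : {set E}) : R :=
  spin_weight s s' / Zpart * \prod_e pair_law s s' e (e \in w) (e \in ws).

Definition nu (xi : {set E}) : R :=
  \sum_s \sum_s' \sum_(ws : {set E}) joint_law s s' xi ws.

End Model.

From HB Require Import structures.
From mathcomp Require Import all_boot all_order all_algebra all_fingroup.
From mathcomp Require Import finmap.
From mathcomp Require Import complex.
From mathcomp Require Import ring lra.
Import Order.TTheory GRing.Theory Num.Theory.
Set Implicit Arguments. Unset Strict Implicit. Unset Printing Implicit Defensive.

(* Summing out the spins, the pair (omega, omega^* ) = (x, w) has weight
   W(x, w) = prod_e c(e \in x, e \in w) * N_V(x) * N_F(w), where c takes the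
   values a, b, 1 - a - b, 0 on the four states of (e, e^* ), and N_V(x), N_F(w)
   count the vertex spins constant on the clusters of x and the face spins
   constant on the clusters of w.  Each factor is log-supermodular in
   (x, complement of w): c edge by edge, and N = q^#clusters because adding an
   edge either keeps the clusters or merges two of them, which is a local
   log-supermodularity condition that propagates to the whole lattice.
   Log-supermodularity on a product of Boolean lattices survives summing out one
   coordinate at a time (Ahlswede-Daykin on the two-point lattice), so the
   x-marginal of W, which is nu up to the factor 1/Z, satisfies it too. *)

Local Open Scope ring_scope.

Lemma ler_pM_cancel (R : numDomainType) (x1 x2 x3 x4 y z : R) :
  0 < y -> 0 < z -> 0 <= x1 -> 0 <= x3 ->
  x1 * y <= x2 * z -> x3 * z <= x4 * y -> x1 * x3 <= x2 * x4.
Proof.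
move=> y_gt0 z_gt0 x1_ge0 x3_ge0 le1 le2.
have := ler_pM (mulr_ge0 x1_ge0 (ltW y_gt0)) (mulr_ge0 x3_ge0 (ltW z_gt0)) le1 le2.
by rewrite mulrACA [x2 * z * _]mulrACA [z * y]mulrC ler_pM2r ?mulr_gt0.
Qed.

Section LogSupermodular.
Variables (R : numDomainType) (I : finType).

Definition log_supermodular (f : {set I} -> R) :=
  forall X Y, f X * f Y <= f (X :&: Y) * f (X :|: Y).

Variable f : {set I} -> R.
Hypothesis f_gt0 : forall X, 0 < f X.
Hypothesis f_local : forall Z e g, f (e |: Z) * f (g |: Z) <= f Z * f (e |: (g |: Z)).

Lemma log_supermodular_local_mono (W W' : {set I}) d : W \subset W' ->
  f (d |: W) * f W' <= f W * f (d |: W').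
Proof.
move=> sWW'; have [n] := ubnP #|W' :\: W|; elim: n W sWW' => // n IH W sWW' ltWn.
have [/eqP|[g gW'W]] := set_0Vmem (W' :\: W).
  rewrite setD_eq0 => sW'W; have -> : W' = W by apply/eqP; rewrite eqEsubset sW'W.
  by rewrite mulrC.
move: (gW'W); rewrite inE => /andP[_ gW'].
apply: (ler_pM_cancel (f_gt0 (g |: W)) (f_gt0 (d |: (g |: W))) (ltW (f_gt0 _))
                      (ltW (f_gt0 _)) (f_local _ _ _)).
rewrite mulrC [_ * f (g |: W)]mulrC; apply: IH; first by rewrite subUset sub1set gW'.
by rewrite setUC -setDDl; apply: leq_trans (proper_card (properD1 gW'W)) ltWn.
Qed.

Lemma log_supermodular_local_global : log_supermodular f.
Proof.
move=> X Y; have [n] := ubnP #|Y :\: X|; elim: n Y => // n IH Y ltYn.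
have [/eqP|[d dYX]] := set_0Vmem (Y :\: X).
  by rewrite setD_eq0 => sYX; rewrite (setIidPr sYX) (setUidPl sYX) mulrC.
move: (dYX); rewrite inE => /andP[dX dY].
apply: (ler_pM_cancel (f_gt0 (Y :\ d)) (f_gt0 (X :|: Y :\ d)) (ltW (f_gt0 _))
                      (ltW (f_gt0 _))).
  have -> : X :&: Y = X :&: (Y :\ d).
    by apply/setP => i; rewrite !inE; case: eqVneq => // ->; rewrite (negbTE dX).
  apply: IH; rewrite setDDl setUC -setDDl.
  exact: leq_trans (proper_card (properD1 dYX)) ltYn.
have := log_supermodular_local_mono d (subsetUr X (Y :\ d)).
by rewrite [d |: (X :|: _)]setUCA !setD1K // [f (Y :\ d) * _]mulrC.
Qed.

End LogSupermodular.

Lemma lerD_of_mul_le (R : realDomainType) (u v x y : R) :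
  0 <= x <= u -> 0 <= y <= u -> 0 <= v -> x * y <= u * v -> x + y <= u + v.
Proof.
move=> /andP[x_ge0 xu] /andP[y_ge0 yu] v_ge0 xy_uv.
have [u0|u_neq0] := eqVneq u 0; first by rewrite u0 in xu yu *; lra.
have u_gt0 : 0 < u by rewrite lt_def u_neq0 (le_trans x_ge0 xu).
by rewrite -(ler_pM2l u_gt0); nra.
Qed.

Lemma ahlswede_daykin_bool (R : realDomainType) (f g h k : bool -> R) :
  (forall b, 0 <= f b) -> (forall b, 0 <= g b) -> (forall b, 0 <= h b) ->
  (forall b, 0 <= k b) ->
  (forall b1 b2, f b1 * g b2 <= h (b1 && b2) * k (b1 || b2)) ->
  (\sum_b f b) * (\sum_b g b) <= (\sum_b h b) * (\sum_b k b).
Proof.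
move=> f_ge0 g_ge0 h_ge0 k_ge0 fg_hk; rewrite !big_bool /=.
have := fg_hk true true; have := fg_hk false false.
have := fg_hk true false; have := fg_hk false true => /= le_ft le_tf le_ff le_tt.
(* The diagonal terms are bounded directly, the two cross terms jointly. *)
have : f true * g false + f false * g true <= h false * k true + h true * k false.
  apply: lerD_of_mul_le; rewrite ?mulr_ge0 //.
  have -> : f true * g false * (f false * g true) = f true * g true * (f false * g false).
    by ring.
  have -> : h false * k true * (h true * k false) = h true * k true * (h false * k false).
    by ring.
  by rewrite ler_pM ?mulr_ge0.
lra.
Qed.

Section Marginal.
Variables (R : realDomainType) (I J : finType).

Definition log_supermodular2 (G : {set I} -> {set J} -> R) := forall x1 x2 y1 y2,
  G x1 y1 * G x2 y2 <= G (x1 :&: x2) (y1 :&: y2) * G (x1 :|: x2) (y1 :|: y2).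

Definition setmem (j : J) (b : bool) (y : {set J}) :=
  [set i | if i == j then b else i \in y].

Lemma setmemI j b1 b2 y1 y2 :
  setmem j b1 y1 :&: setmem j b2 y2 = setmem j (b1 && b2) (y1 :&: y2).
Proof. by apply/setP => i; rewrite !inE; case: (i == j). Qed.

Lemma setmemU j b1 b2 y1 y2 :
  setmem j b1 y1 :|: setmem j b2 y2 = setmem j (b1 || b2) (y1 :|: y2).
Proof. by apply/setP => i; rewrite !inE; case: (i == j). Qed.

Definition marginal_step j (G : {set I} -> {set J} -> R) x y :=
  \sum_b G x (setmem j b y).

Lemma marginal_step_log_supermodular2 j G :
  (forall x y, 0 <= G x y) -> log_supermodular2 G ->
  (forall x y, 0 <= marginal_step j G x y) /\ log_supermodular2 (marginal_step j G).
Proof.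
move=> G_ge0 G_lsm; split=> [x y|x1 x2 y1 y2]; first exact: sumr_ge0.
apply: ahlswede_daykin_bool => // b1 b2.
by rewrite -setmemI -setmemU G_lsm.
Qed.

Definition marginal_steps s G := foldr marginal_step G s.

Lemma eq_setD_setmem j b (S y z : {set J}) : j \notin S ->
  (z :\: S == setmem j b y :\: S) = (z :\: (j |: S) == y :\: (j |: S)) && ((j \in z) == b).
Proof.
move=> jS; apply/eqP/andP => [/setP eqz|[/eqP/setP eqz /eqP jz]].
  split; last by have := eqz j; rewrite !inE eqxx (negbTE jS) => /= ->.
  apply/eqP/setP => i; have := eqz i; rewrite !inE.
  by case: eqVneq.
apply/setP => i; have := eqz i; rewrite !inE.
by case: eqVneq => [->|]; rewrite ?(negbTE jS) ?jz.
Qed.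

Lemma marginal_stepsE s G x y : uniq s ->
  marginal_steps s G x y = \sum_(z | z :\: [set:: s] == y :\: [set:: s]) G x z.
Proof.
elim: s y => [|j s IH] y /=.
  by move=> _; rewrite set_nil (big_pred1 y) // => z; rewrite /= !setD0.
case/andP => js uniq_s; rewrite set_cons.
rewrite [RHS](partition_big (fun z : {set J} => j \in z) xpredT) //.
by apply: eq_bigr => b _; rewrite IH //; apply: eq_bigl => z; rewrite eq_setD_setmem ?inE.
Qed.

Lemma sum_marginal_steps G x : \sum_y G x y = marginal_steps (enum J) G x set0.
Proof.
rewrite marginal_stepsE ?enum_uniq //.
have -> : [set:: enum J] = [set: J] by apply/setP => j; rewrite !inE mem_enum.
by apply: eq_bigl => z; rewrite !setDT eqxx.
Qed.

Lemma log_supermodular_marginal G :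
  (forall x y, 0 <= G x y) -> log_supermodular2 G ->
  log_supermodular (fun x => \sum_y G x y).
Proof.
move=> G_ge0 G_lsm x1 x2; rewrite !sum_marginal_steps.
suff [_ /(_ x1 x2 set0 set0)] : (forall x y, 0 <= marginal_steps (enum J) G x y) /\
                                log_supermodular2 (marginal_steps (enum J) G).
  by rewrite setI0 setU0.
by elim: (enum J) => [|j s [IH1 IH2]] //=; apply: marginal_step_log_supermodular2.
Qed.

End Marginal.

Lemma prodr_indicator_notin (R : comPzSemiRingType) (I : finType) (A : {set I}) :
  \prod_i ((i \notin A)%:R : R) = (A == set0)%:R.
Proof.
have [->|[i iA]] := set_0Vmem A; first by rewrite eqxx big1 // => i _; rewrite inE.
rewrite (bigD1 i) //= iA mul0r; case: eqP => // A0.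
by rewrite A0 inE in iA.
Qed.

Section TiedSpins.
Variables (E T : finType) (p : E * bool -> E * bool).

(* For p = rot (resp. fperm rot) these are the vertex (resp. face) spins that
   agree across every edge of X. *)
Definition tied_spins (X : {set E}) : {set {ffun E * bool -> T}} :=
  [set s : {ffun E * bool -> T} |
    [forall d, s (p d) == s d] & [forall e in X, s (e, true) == s (e, false)]].

Definition tie_rel (X : {set E}) : rel (E * bool) :=
  fun d d' => [|| d' == p d, d == p d' | (d.1 \in X) && (d' == alpha d)].

Lemma tie_rel_sym X : symmetric (tie_rel X).
Proof.
move=> [e c] [e' c']; rewrite /tie_rel /alpha /= orbCA; congr [|| _, _ | _].
by apply/andP/andP => -[eX /eqP[-> ->]]; rewrite ?negbK eqxx.
Qed.

Lemma tied_spinsP X (s : {ffun E * bool -> T}) :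
  reflect (forall d d', tie_rel X d d' -> s d = s d') (s \in tied_spins X).
Proof.
rewrite inE; apply: (iffP andP) => [[/forallP sp /forall_inP sX] d d'|s_rel].
  case/or3P => [/eqP->|/eqP->|/andP[dX /eqP->]]; first by rewrite (eqP (sp d)).
    by rewrite (eqP (sp d')).
  by case: d dX => e [] /= /sX /eqP.
split; first by apply/forallP => d; rewrite (s_rel d (p d)) // /tie_rel eqxx.
apply/forall_inP => e eX.
by rewrite (s_rel (e, true) (e, false)) // /tie_rel eX eqxx !orbT.
Qed.

Lemma tied_spins_connect X (s : {ffun E * bool -> T}) d d' :
  s \in tied_spins X -> connect (tie_rel X) d d' -> s d = s d'.
Proof.
move=> /tied_spinsP s_rel /connectP[pth]; elim: pth d => [|d'' pth IH] d /=.
  by move=> _ ->.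
by case/andP => /s_rel -> /IH.
Qed.

Lemma tied_spinsU1 X e (s : {ffun E * bool -> T}) :
  (s \in tied_spins (e |: X)) = (s \in tied_spins X) && (s (e, true) == s (e, false)).
Proof.
rewrite !inE -andbA; congr (_ && _).
apply/forall_inP/andP => [sX|[/forall_inP sX se] e'].
  by split; [apply/forall_inP => e' e'X|]; apply: sX; rewrite !inE ?e'X ?eqxx ?orbT.
by rewrite !inE => /orP[/eqP->|/sX].
Qed.

Lemma tied_spins_subU1 X e : tied_spins (e |: X) \subset tied_spins X.
Proof. by apply/subsetP => s; rewrite tied_spinsU1 => /andP[]. Qed.

Definition recolor (s : {ffun E * bool -> T}) X d0 (t : T) : {ffun E * bool -> T} :=
  [ffun d => if connect (tie_rel X) d0 d then t else s d].

Lemma recolor_tied X d0 s t : s \in tied_spins X -> recolor s X d0 t \in tied_spins X.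
Proof.
move=> /tied_spinsP s_rel; apply/tied_spinsP => d d' dd'; rewrite !ffunE.
have -> : connect (tie_rel X) d0 d' = connect (tie_rel X) d0 d.
  apply/idP/idP => /connect_trans; apply; apply: connect1 => //.
  by rewrite tie_rel_sym.
by case: ifP => // _; apply: s_rel.
Qed.

Lemma card_tied_spinsU1 X e :
  tied_spins (e |: X) = tied_spins X \/
  #|tied_spins X| = (#|tied_spins (e |: X)| * #|T|)%N.
Proof.
set d1 := (e, true); set d0 := (e, false).
case: (boolP (connect (tie_rel X) d0 d1)) => [c01|nc01].
  left; apply/setP => s; rewrite tied_spinsU1.
  by case: (boolP (s \in _)) => // sX; rewrite (tied_spins_connect sX c01) eqxx.
right.
(* A spin tied on X is a spin tied on e |: X, recolored on the class of d0. *)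
pose split_off (st : {ffun E * bool -> T} * T) := recolor st.1 X d0 st.2.
have inj : {in setX (tied_spins (e |: X)) [set: T] &, injective split_off}.
  move=> [s t] [s' t'] /setXP[sX _] /setXP[s'X _] /ffunP eqs.
  have := eqs d0; rewrite !ffunE connect0 /= => <-; congr pair; apply/ffunP => d.
  move: sX s'X; rewrite !tied_spinsU1 => /andP[sX /eqP s1] /andP[s'X /eqP s'1].
  have := eqs d; rewrite !ffunE; case: ifP => // c0d _.
  rewrite -(tied_spins_connect sX c0d) -(tied_spins_connect s'X c0d) -s1 -s'1.
  by have := eqs d1; rewrite !ffunE (negbTE nc01).
suff -> : tied_spins X = split_off @: setX (tied_spins (e |: X)) [set: T].
  by rewrite (card_in_imset inj) cardsX cardsT.
apply/setP => s; apply/idP/imsetP => [sX|[[s' t] /setXP[s'X _] ->]]; last first.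
  by apply: recolor_tied; move: s'X; rewrite tied_spinsU1 => /andP[].
exists (recolor s X d0 (s d1), s d0).
  rewrite in_setX in_setT andbT tied_spinsU1 recolor_tied //= !ffunE connect0.
  by rewrite (negbTE nc01).
apply/ffunP => d; rewrite /split_off /= !ffunE.
by case: ifP => c0d; rewrite ?ffunE ?c0d // (tied_spins_connect sX c0d).
Qed.

Lemma card_tied_spins_local (Z : {set E}) e g :
  (#|tied_spins (e |: Z)| * #|tied_spins (g |: Z)| <=
   #|tied_spins Z| * #|tied_spins (e |: (g |: Z))|)%N.
Proof.
have [eZ|cardZ] := card_tied_spinsU1 Z e.
  suff -> : tied_spins (e |: (g |: Z)) = tied_spins (g |: Z) by rewrite eZ.
  apply/setP => s; rewrite tied_spinsU1 andb_idr // => /(subsetP (tied_spins_subU1 _ _)).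
  by rewrite -eZ tied_spinsU1 => /andP[].
have [->|->] := card_tied_spinsU1 (g |: Z) e.
  by rewrite leq_mul2r subset_leq_card ?orbT // tied_spins_subU1.
by rewrite cardZ mulnA mulnAC.
Qed.

End TiedSpins.

Lemma card_tied_spins_log_supermodular (R : numDomainType) (E T : finType) p (t0 : T) :
  log_supermodular (fun X : {set E} => (#|tied_spins T p X|%:R : R)).
Proof.
apply: log_supermodular_local_global => [X|Z e g]; last first.
  by rewrite -!natrM ler_nat card_tied_spins_local.
rewrite ltr0n; apply/card_gt0P; exists [ffun=> t0].
by rewrite inE; apply/andP; split; [apply/forallP|apply/forall_inP] => *; rewrite !ffunE.
Qed.

Section FKGLatticeCondition.
Variables (R : rcfType) (E : finType) (rot : {perm E * bool}).
Variables (Q Q' : {fset R[i]}) (a b : R).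
Hypotheses (a_ge0 : 0 <= a) (b_ge0 : 0 <= b) (ab_le1 : a + b <= 1).

Local Notation vtied x := (tied_spins Q rot x).
Local Notation ftied w := (tied_spins Q' (fperm rot) w).

Definition edge_weight (o os : bool) : R :=
  match o, os with
  | true, false => a
  | false, true => b
  | true, true => 1 - a - b
  | false, false => 0
  end.

Definition open_weight (x w : {set E}) := \prod_e edge_weight (e \in x) (e \in w).

Definition percolation_weight (x w : {set E}) :=
  open_weight x w * #|vtied x|%:R * #|ftied w|%:R.

Lemma edge_weight_ge0 o os : 0 <= edge_weight o os.
Proof. by case: o os => -[] //=; rewrite -addrA -opprD subr_ge0. Qed.

Lemma open_weight_ge0 x w : 0 <= open_weight x w.
Proof. by apply: prodr_ge0 => e _; apply: edge_weight_ge0. Qed.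

Lemma edge_weight_log_supermodular o1 os1 o2 os2 :
  edge_weight o1 os1 * edge_weight o2 os2 <=
  edge_weight (o1 && o2) (os1 || os2) * edge_weight (o1 || o2) (os1 && os2).
Proof.
by case: o1 os1 o2 os2 => -[] [] [] /=; rewrite ?mul0r ?mulr0 ?mulr_ge0 ?edge_weight_ge0 //
  [X in X <= _]mulrC.
Qed.

Lemma open_weight_log_supermodular x1 x2 w1 w2 :
  open_weight x1 w1 * open_weight x2 w2 <=
  open_weight (x1 :&: x2) (w1 :|: w2) * open_weight (x1 :|: x2) (w1 :&: w2).
Proof.
rewrite /open_weight -!big_split /=; apply: ler_prod => e _.
by rewrite !inE mulr_ge0 ?edge_weight_ge0 ?edge_weight_log_supermodular.
Qed.

Lemma tied_spins_eta_v s x : (s \in vtied x) = vspin rot s && [disjoint eta_v s & x].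
Proof.
rewrite inE disjoint_sym disjoint_subset; congr (_ && _).
by apply/forall_inP/subsetP => tied e /tied; rewrite !inE val_eqE ?negbK.
Qed.

Lemma tied_spins_eta_f s' w : (s' \in ftied w) = fspin rot s' && [disjoint eta_f s' & w].
Proof.
rewrite inE disjoint_sym disjoint_subset; congr (_ && _).
by apply/forall_inP/subsetP => tied e /tied; rewrite !inE val_eqE ?negbK.
Qed.

Lemma pair_law_edgewise (s : {ffun E * bool -> Q}) (s' : {ffun E * bool -> Q'})
    (x w : {set E}) e :
  [disjoint eta_v s & eta_f s'] ->
  (if e \in eta_f s' then a else 1) * (if e \in eta_v s then b else 1) *
    pair_law a b s s' e (e \in x) (e \in w) =
  (e \notin (eta_v s :&: x) :|: (eta_f s' :&: w))%:R * edge_weight (e \in x) (e \in w).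
Proof.
move=> disj; rewrite /pair_law in_setU !in_setI.
case fe: (e \in eta_f s'); case ve: (e \in eta_v s).
- by rewrite (disjointFr disj ve) in fe.
all: by case: (e \in x) (e \in w) => -[]; rewrite /= ?mul1r ?mulr1 ?mul0r ?mulr0.
Qed.

Lemma spin_weight_pair_law (s : {ffun E * bool -> Q}) (s' : {ffun E * bool -> Q'})
    (x w : {set E}) :
  spin_weight rot a b s s' * \prod_e pair_law a b s s' e (e \in x) (e \in w) =
  if (s \in vtied x) && (s' \in ftied w) then open_weight x w else 0.
Proof.
rewrite tied_spins_eta_v tied_spins_eta_f /spin_weight /admissible.
case: (vspin rot s) (fspin rot s') => [] [] /=; rewrite ?mul0r ?andbF //.
have [disj|ndisj] := boolP [disjoint eta_v s & eta_f s']; last first.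
  rewrite mul0r; case: andP => // -[vx fw].
  have /set0Pn[e] : eta_v s :&: eta_f s' != set0 by rewrite setI_eq0.
  rewrite inE => /andP[ve fe]; rewrite /open_weight (bigD1 e) //=.
  by rewrite (disjointFr vx ve) (disjointFr fw fe) mul0r.
rewrite -!prodr_const (big_mkcond (mem (eta_f s'))) (big_mkcond (mem (eta_v s))).
rewrite -!big_split /=.
rewrite (eq_bigr _ (fun e _ => pair_law_edgewise x w e disj)).
rewrite big_split /= prodr_indicator_notin setU_eq0 !setI_eq0.
by rewrite mulr_natl mulrb.
Qed.

Lemma sum_spin_weight_pair_law (x w : {set E}) :
  \sum_(s : {ffun E * bool -> Q}) \sum_(s' : {ffun E * bool -> Q'})
    spin_weight rot a b s s' * \prod_e pair_law a b s s' e (e \in x) (e \in w) =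
  percolation_weight x w.
Proof.
rewrite pair_big /=; under eq_bigr => p _ do rewrite spin_weight_pair_law.
rewrite -big_mkcond /= (eq_bigl (mem (setX (vtied x) (ftied w)))) => [|[s s']]; last first.
  by rewrite !inE.
by rewrite sumr_const cardsX -mulr_natr natrM mulrA.
Qed.

Lemma nuE (x : {set E}) :
  nu rot Q Q' a b x = (Zpart rot Q Q' a b)^-1 * \sum_w percolation_weight x w.
Proof.
rewrite /nu /joint_law; under eq_bigr do rewrite exchange_big /=.
rewrite exchange_big mulr_sumr; apply: eq_bigr => w _.
rewrite -sum_spin_weight_pair_law mulr_sumr; apply: eq_bigr => s _.
by rewrite mulr_sumr; apply: eq_bigr => s' _; rewrite mulrAC mulrC.
Qed.

Lemma percolation_weight_log_supermodular (t0 : Q) (t0' : Q') x1 x2 w1 w2 :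
  percolation_weight x1 w1 * percolation_weight x2 w2 <=
  percolation_weight (x1 :&: x2) (w1 :|: w2) * percolation_weight (x1 :|: x2) (w1 :&: w2).
Proof.
have regroup x w x' w' : percolation_weight x w * percolation_weight x' w' =
    open_weight x w * open_weight x' w' * (#|vtied x|%:R * #|vtied x'|%:R) *
    (#|ftied w|%:R * #|ftied w'|%:R).
  by rewrite /percolation_weight; ring.
rewrite !regroup; apply: ler_pM; rewrite ?mulr_ge0 ?open_weight_ge0 //.
  apply: ler_pM; rewrite ?mulr_ge0 ?open_weight_ge0 ?open_weight_log_supermodular //.
  exact: (card_tied_spins_log_supermodular _ rot t0).
by rewrite [X in _ <= X]mulrC; apply: (card_tied_spins_log_supermodular _ (fperm rot) t0').
Qed.

Lemma nu_log_supermodular (t0 : Q) (t0' : Q') : log_supermodular (nu rot Q Q' a b).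
Proof.
pose G x y := percolation_weight x (~: y).
have nuG x : nu rot Q Q' a b x = (Zpart rot Q Q' a b)^-1 * \sum_y G x y.
  by rewrite nuE (reindex_inj (@setC_inj E)).
have Z_ge0 : 0 <= (Zpart rot Q Q' a b)^-1.
  rewrite invr_ge0 sumr_ge0 // => s _; rewrite sumr_ge0 // => s' _.
  by rewrite /spin_weight; case: ifP; rewrite ?mulr_ge0 ?exprn_ge0.
have G_ge0 x y : 0 <= G x y by rewrite !mulr_ge0 ?open_weight_ge0.
have G_lsm : log_supermodular2 G.
  move=> x1 x2 y1 y2; rewrite /G !setCI !setCU.
  exact: percolation_weight_log_supermodular.
move=> x1 x2; rewrite !nuG mulrACA [X in _ <= X]mulrACA.
by rewrite ler_wpM2l ?mulr_ge0 //; apply: log_supermodular_marginal.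
Qed.

End FKGLatticeCondition.

Unset Implicit Arguments.

Theorem proposition4p2 (R : rcfType) (E : finType) (rot : {perm E * bool})
  (q q' : nat) (Q Q' : {fset R[i]}) (a b : R) :
  map_connected rot ->
  (1 <= q)%N -> (1 <= q')%N -> (#|` Q| = q)%fset -> (#|` Q'| = q')%fset ->
  (forall x, x \in Q -> - x \in Q) -> (forall x, x \in Q' -> - x \in Q') ->
  0 < a -> a <= 1 -> 0 < b -> b <= 1 ->
  a + b <= 1 ->
  forall xi1 xi2 : {set E},
    nu rot Q Q' a b (xi1 :&: xi2) * nu rot Q Q' a b (xi1 :|: xi2)
      >= nu rot Q Q' a b xi1 * nu rot Q Q' a b xi2.
Proof.
move=> _ q_gt0 q'_gt0 cardQ cardQ' _ _ a_gt0 _ b_gt0 _ ab_le1 xi1 xi2.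
have [t0 t0Q] : exists t, t \in Q by apply/fset0Pn; rewrite -cardfs_gt0 cardQ.
have [t0' t0'Q'] : exists t, t \in Q' by apply/fset0Pn; rewrite -cardfs_gt0 cardQ'.
exact: (nu_log_supermodular rot (ltW a_gt0) (ltW b_gt0) ab_le1
                             (FSetSub t0Q) (FSetSub t0'Q')).
Qed.
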